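(* Let $n\geq 2$, $1\leq k\leq n-1$ and $w\in\mathfrak{S}_n$. The subsequence of $w$ formed by all its $k$-peaks and $k$-valleys (in the order they appear in $w$) is a longest $k$-zigzagging subsequence of $w$; i.e., $zs_k(w)$ equals the number of $k$-peaks plus the number of $k$-valleys of $w$. Consequently, $E_n(zs_k)$ is two times the average number of $k$-peaks of a permutation in $\mathfrak{S}_n$, i.e. $E_n(zs_k)=\frac{2}{n!}\sum_{w\in\mathfrak{S}_n}\#\{k\text{-peaks of }w\}$.
   Context: $\mathfrak{S}_n$ is the set of permutations $w=w_1\cdots w_n$ of $\{1,\dots,n\}$. A section of $w$ is a consecutive block $w_s\cdots w_t$ ($s\le t$). A section $w_s\cdots w_t$ is a $k$-up if $s<t$ and $w_t-w_s\geq k$, and a $k$-down if $s<t$ and $w_s-w_t\geq k$; a $k$-up/$k$-down ''in'' $w_a\cdots w_b$ means one $w_s\cdots w_t$ with $a\le s<t\le b$. A section $w_i\cdots w_j$ ($i<j$) is $k$-ascending if $w_i=\min\{w_i,\dots,w_j\}$, $w_j=\max\{w_i,\dots,w_j\}$, $w_j-w_i\geq k$, and there is no $k$-down in it; it is $k$-descending if $w_i=\max$, $w_j=\min$ of $\{w_i,\dots,w_j\}$, $w_i-w_j\geq k$, and there is no $k$-up in it. Such a section is maximal if not contained in another section of the same type. If $w_i\cdots w_j$ is maximal $k$-ascending, $w_i$ is a $k$-valley and $w_j$ a $k$-peak of $w$; if it is maximal $k$-descending, $w_i$ is a $k$-peak and $w_j$ a $k$-valley of $w$. A subsequence $w_{i_1}\cdots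 w_{i_s}$ ($i_1<\dots<i_s$) is zigzagging if $w_{i_1}>w_{i_2}<w_{i_3}>\cdots$ or $w_{i_1}<w_{i_2}>w_{i_3}<\cdots$, and $k$-zigzagging if moreover $|w_{i_j}-w_{i_{j+1}}|\geq k$ for all $j$. $zs_k(w)$ is the maximal length of a $k$-zigzagging subsequence of $w$, and $E_n(zs_k)=\frac1{n!}\sum_{w\in\mathfrak{S}_n}zs_k(w)$. *)

(* Permutations w in S_n are 'S_n = {perm 'I_n}; the value
   w_i is represented by (w i : nat) in {0,..,n-1} (a shift by 1 of the paper's
   values, which does not affect any difference or comparison). *)
From HB Require Import structures.
From mathcomp Require Import all_boot all_order all_algebra all_fingroup.
Set Implicit Arguments. Unset Strict Implicit. Unset Printing Implicit Defensive.
Import GRing.Theory Num.Theory.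

Section KZigzag.
Variables (n k : nat) (w : 'S_n).

Definition wv (i : 'I_n) : nat := w i.

Definition kup (s t : 'I_n) : bool := (s < t) && (wv s + k <= wv t).
Definition kdown (s t : 'I_n) : bool := (s < t) && (wv t + k <= wv s).

Definition no_kdown_in (i j : 'I_n) : bool :=
  [forall s : 'I_n, forall t : 'I_n, ((i <= s) && (t <= j)) ==> ~~ kdown s t].
Definition no_kup_in (i j : 'I_n) : bool :=
  [forall s : 'I_n, forall t : 'I_n, ((i <= s) && (t <= j)) ==> ~~ kup s t].

Definition kasc (i j : 'I_n) : bool :=
  [&& i < j,
      [forall m : 'I_n, ((i <= m) && (m <= j)) ==> (wv i <= wv m) && (wv m <= wv j)],
      wv i + k <= wv j &
      no_kdown_in i j].

Definition kdesc (i j : 'I_n) : bool :=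
  [&& i < j,
      [forall m : 'I_n, ((i <= m) && (m <= j)) ==> (wv j <= wv m) && (wv m <= wv i)],
      wv j + k <= wv i &
      no_kup_in i j].

Definition max_kasc (i j : 'I_n) : bool :=
  kasc i j &&
  [forall i' : 'I_n, forall j' : 'I_n,
     [&& kasc i' j', i' <= i & j <= j'] ==> (i' == i) && (j' == j)].
Definition max_kdesc (i j : 'I_n) : bool :=
  kdesc i j &&
  [forall i' : 'I_n, forall j' : 'I_n,
     [&& kdesc i' j', i' <= i & j <= j'] ==> (i' == i) && (j' == j)].

Definition kpeaks : {set 'I_n} :=
  [set p | [exists i, max_kasc i p] || [exists j, max_kdesc p j]].
Definition kvalleys : {set 'I_n} :=
  [set v | [exists j, max_kasc v j] || [exists i, max_kdesc i v]].

Definition subseq_at (I : {set 'I_n}) : seq nat := [seq wv i | i <- enum I].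

End KZigzag.

Definition kzigzag (k : nat) (s : seq nat) : bool :=
  let m := (size s).-1 in
  [forall j : 'I_m, (nth 0 s j + k <= nth 0 s j.+1) || (nth 0 s j.+1 + k <= nth 0 s j)] &&
  ([forall j : 'I_m, (nth 0 s j.+1 < nth 0 s j) == ~~ odd j] ||
   [forall j : 'I_m, (nth 0 s j < nth 0 s j.+1) == ~~ odd j]).

Definition zs (n k : nat) (w : 'S_n) : nat :=
  \max_(I : {set 'I_n} | kzigzag k (subseq_at w I)) #|I|.

Definition E_zs (n k : nat) : rat :=
  ((\sum_(w : 'S_n) zs k w)%:R / (n`!)%:R)%R.

From HB Require Import structures.
From mathcomp Require Import all_boot all_order all_algebra all_fingroup.
From mathcomp Require Import zify.
Import GRing.Theory Num.Theory.
Set Implicit Arguments. Unset Strict Implicit. Unset Printing Implicit Defensive.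

(* Maximal k-ascending and k-descending sections overlap in at most one point, and a
   maximal section of one direction is immediately followed by one of the other
   direction unless the values never again move by k. Hence consecutive k-extrema of w
   are the two ends of a maximal section, so peaks and valleys alternate with gaps of
   at least k: they form a k-zigzagging subsequence. Conversely, every step of a
   k-zigzagging subsequence is a k-up or k-down, so it meets a maximal section of its
   direction; since directions alternate, the left ends of these sections strictly
   increase, and with the last right end they give at least as many k-extrema as the
   subsequence has terms. The complement w |-> n+1-w exchanges the two directions,
   hence peaks and valleys; this yields the averaging identity. *)

Lemma sorted_enum_ltn n (I : {set 'I_n}) : sorted (fun i j : 'I_n => i < j) (enum I).
Proof.
have -> : enum I = [seq x <- enum 'I_n | x \in I] by rewrite {1}/enum_mem -enumT.
apply: sorted_filter; first exact: ltn_trans.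
by have := iota_ltn_sorted 0 n; rewrite -val_enum_ord sorted_map.
Qed.

Lemma enum_gap n (I : {set 'I_n}) x0 j (x : 'I_n) : j.+1 < size (enum I) ->
  nth x0 (enum I) j < x -> x < nth x0 (enum I) j.+1 -> x \notin I.
Proof.
move=> js jx xj; apply/negP => xI.
have xe : x \in enum I by rewrite mem_enum.
have Ex := nth_index x0 xe; have ix : index x (enum I) < size (enum I) by rewrite index_mem.
have lt_nth := sorted_ltn_nth (fun y x z : 'I_n => @ltn_trans y x z) x0 (sorted_enum_ltn I).
case: (ltngtP (index x (enum I)) j) => [xlt|jlt|xeq].
- by have := ltn_trans (lt_nth _ _ ix (ltnW js) xlt) jx; rewrite Ex ltnn.
- have [xeq|jlt'] := eqVneq (index x (enum I)) j.+1; first by move: xj; rewrite -xeq Ex ltnn.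
  have xlt : j.+1 < index x (enum I) by rewrite ltn_neqAle eq_sym jlt' jlt.
  by have := ltn_trans xj (lt_nth _ _ js ix xlt); rewrite Ex ltnn.
- by move: jx; rewrite -xeq Ex ltnn.
Qed.

Lemma gap_ltnNgt k p q : 0 < k -> (p + k <= q) || (q + k <= p) -> (p < q) = ~~ (q < p).
Proof. by move=> k_gt0 pq; rewrite -leqNgt leq_eqVlt orbC; case: eqP => // pq'; lia. Qed.

Definition gapped k (s : seq nat) : Prop :=
  forall i, i.+1 < size s ->
    (nth 0 s i + k <= nth 0 s i.+1) || (nth 0 s i.+1 + k <= nth 0 s i).

Definition alternating (s : seq nat) : Prop :=
  forall i, i.+2 < size s ->
    (nth 0 s i < nth 0 s i.+1) != (nth 0 s i.+1 < nth 0 s i.+2).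

Lemma kzigzagE k s : 0 < k -> kzigzag k s <-> gapped k s /\ alternating s.
Proof.
move=> k_gt0; rewrite /kzigzag; set m := (size s).-1.
have ordm i : i.+1 < size s -> i < m by rewrite /m; case: (size s).
pose down i := nth 0 s i.+1 < nth 0 s i.
have up_down i : gapped k s -> i.+1 < size s -> (nth 0 s i < nth 0 s i.+1) = ~~ down i.
  by move=> G /G /(gap_ltnNgt k_gt0).
split.
- case/andP=> /forallP G A.
  have Gs : gapped k s by move=> i /ordm im; exact: (G (Ordinal im)).
  split=> // i i2; have i1 := ltnW i2.
  rewrite up_down // up_down //.
  have {}A : down i.+1 = ~~ down i.
    case/orP: A => /forallP A.
    + have /eqP := A (Ordinal (ordm _ i1)); have /eqP := A (Ordinal (ordm _ i2)) => /=.
      by rewrite -/(down i) -/(down i.+1) => -> ->.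
    + have /eqP := A (Ordinal (ordm _ i1)); have /eqP := A (Ordinal (ordm _ i2)) => /=.
      rewrite !up_down //; case: (down i); case: (down i.+1); by case: (odd i).
  by rewrite A; case: (down i).
- case=> G A; have parity i : i.+1 < size s -> down i = down 0 (+) odd i.
    elim: i => [|i IH] i1; first by rewrite addbF.
    have := A i i1; rewrite up_down ?(ltnW i1) // up_down // IH ?(ltnW i1) //.
    by rewrite /=; case: (down 0); case: (odd i); case: (down i.+1).
  apply/andP; split; first by apply/forallP=> i; apply: G; case: i => i /=; rewrite /m; lia.
  case D0: (down 0); [apply/orP; left | apply/orP; right]; apply/forallP=> -[i im] /=;
    have i1 : i.+1 < size s by move: im; rewrite /m; lia.
  + by rewrite -/(down i) parity // D0.
  + by rewrite up_down // parity // D0.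
Qed.

Lemma kzigzag_marked k T (f : T -> nat) (P : pred T) (e : seq T) : 0 < k ->
  (forall x0 i, i.+1 < size e ->
     [/\ P (nth x0 e i) = (f (nth x0 e i.+1) < f (nth x0 e i)),
         P (nth x0 e i.+1) = ~~ P (nth x0 e i) &
         (f (nth x0 e i) + k <= f (nth x0 e i.+1)) || (f (nth x0 e i.+1) + k <= f (nth x0 e i))]) ->
  kzigzag k (map f e).
Proof.
move=> k_gt0 step; apply/(kzigzagE _ k_gt0).
case: e step => [|x0 e] step; first by split.
have nth_e i : i < size (x0 :: e) -> nth 0 (map f (x0 :: e)) i = f (nth x0 (x0 :: e) i).
  exact: nth_map.
split=> i; rewrite size_map => ilt.
- by rewrite !nth_e ?(ltnW ilt) //; case: (step x0 i ilt).
- rewrite !nth_e ?(ltnW ilt) ?(ltnW (ltnW ilt)) //.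
  have [P1 P2 G1] := step x0 i (ltnW ilt); have [P3 _ G2] := step x0 i.+1 ilt.
  rewrite (gap_ltnNgt k_gt0 G1) (gap_ltnNgt k_gt0 G2) -P1 -P3 P2.
  by case: (P _).
Qed.

Section MonotoneSections.
Variables (n k : nat).
Hypothesis k_gt0 : 0 < k.
Implicit Types (w : 'S_n) (a b c d i j s t x y : 'I_n).

Lemma wv_ltn w i : wv w i < n.
Proof. exact: ltn_ord. Qed.

Lemma wv_inj w : injective (wv w).
Proof. by move=> i j /ord_inj/perm_inj. Qed.

Lemma kascP w i j : reflect
  [/\ i < j, forall m : 'I_n, i <= m -> m <= j -> wv w i <= wv w m <= wv w j,
      wv w i + k <= wv w j &
      forall s t, i <= s -> t <= j -> s < t -> wv w s < wv w t + k]
  (kasc k w i j).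
Proof.
apply: (iffP and4P) => [[ij /forallP M ijk /forallP D] | [ij M ijk D]]; split=> //.
- by move=> m im mj; have /implyP := M m; rewrite im mj; apply.
- move=> s t si tj st; have /forallP/(_ t)/implyP := D s.
  by rewrite si tj /kdown st ltnNge; apply.
- by apply/forallP=> m; apply/implyP=> /andP[]; apply: M.
- apply/forallP=> s; apply/forallP=> t; apply/implyP=> /andP[si tj].
  by rewrite /kdown; apply/negP => /andP[st]; rewrite leqNgt (D s t si tj st).
Qed.

Lemma kdescP w i j : reflect
  [/\ i < j, forall m : 'I_n, i <= m -> m <= j -> wv w j <= wv w m <= wv w i,
      wv w j + k <= wv w i &
      forall s t, i <= s -> t <= j -> s < t -> wv w t < wv w s + k]
  (kdesc k w i j).
Proof.
apply: (iffP and4P) => [[ij /forallP M ijk /forallP D] | [ij M ijk D]]; split=> //.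
- by move=> m im mj; have /implyP := M m; rewrite im mj; apply.
- move=> s t si tj st; have /forallP/(_ t)/implyP := D s.
  by rewrite si tj /kup st ltnNge; apply.
- by apply/forallP=> m; apply/implyP=> /andP[]; apply: M.
- apply/forallP=> s; apply/forallP=> t; apply/implyP=> /andP[si tj].
  by rewrite /kup; apply/negP => /andP[st]; rewrite leqNgt (D s t si tj st).
Qed.

Lemma max_kascP w i j : reflect
  (kasc k w i j /\ forall c d, kasc k w c d -> c <= i -> j <= d -> c = i /\ d = j)
  (max_kasc k w i j).
Proof.
apply: (iffP andP) => -[ij M]; split=> //.
- move=> c d cd ci jd; have /forallP/(_ c)/forallP/(_ d)/implyP := M.
  by rewrite cd ci jd => /(_ isT) /andP[/eqP-> /eqP->].
- apply/forallP=> c; apply/forallP=> d; apply/implyP=> /and3P[cd ci jd].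
  by have [-> ->] := M c d cd ci jd; rewrite !eqxx.
Qed.

Lemma kasc_cat w a b c d : a <= c -> c <= b -> b <= d ->
  kasc k w a b -> kasc k w c d -> kasc k w a d.
Proof.
move=> ac cb bd /kascP[ab M1 abk D1] /kascP[cd M2 cdk D2]; apply/kascP; split.
- lia.
- move=> m am md; case: (leqP m b) => mb.
  + by have := M1 m am mb; have := M2 b cb bd; lia.
  + by have := M2 m (leq_trans cb (ltnW mb)) md; have := M1 c ac cb; lia.
- by have := M2 b cb bd; lia.
- move=> s t si tj st; case: (leqP t b) => tb; first exact: D1.
  case: (leqP c s) => cs; first exact: D2.
  by have := M1 s si (ltnW (leq_trans cs cb)); have := D2 b t cb tj tb; lia.
Qed.

Lemma max_kasc_cover w a b c d : max_kasc k w a b -> kasc k w c d ->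
  c <= b -> a <= d -> a <= c /\ d <= b.
Proof.
move=> /max_kascP[Hab M] Hcd cb ad.
have /kascP[ab _ _ _] := Hab; have /kascP[cd _ _ _] := Hcd.
case: (leqP a c) => ac; case: (leqP d b) => db //.
- by have [_ E] := M a d (kasc_cat ac cb (ltnW db) Hab Hcd) (leqnn _) (ltnW db); rewrite E ltnn in db.
- by have [E _] := M c b (kasc_cat (ltnW ac) ad db Hcd Hab) (ltnW ac) (leqnn _); rewrite E ltnn in ac.
- by have [E _] := M c d Hcd (ltnW ac) (ltnW db); rewrite E ltnn in ac.
Qed.

Lemma max_kasc_eq w a b c d : max_kasc k w a b -> max_kasc k w c d ->
  c <= b -> a <= d -> a = c /\ b = d.
Proof.
move=> Mab Mcd cb ad; have /max_kascP[Hab _] := Mab; have /max_kascP[Hcd _] := Mcd.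
have := max_kasc_cover Mab Hcd cb ad; have := max_kasc_cover Mcd Hab ad cb.
by case=> ca bd [ac db]; split; apply: ord_inj; lia.
Qed.

Lemma kasc_kdesc_apart w a b c d : kasc k w a b -> kdesc k w c d -> (b <= c) || (d <= a).
Proof.
move=> /kascP[ab M1 abk D1] /kdescP[cd M2 cdk D2]; rewrite leqNgt [d <= a]leqNgt -negb_and.
apply/negP=> /andP[cb ad]; case: (leqP a c) => ac; case: (leqP d b) => db.
- by have := D1 c d ac db cd; lia.
- have := M1 c ac (ltnW cb); have := M2 b (ltnW cb) (ltnW db) => /andP[hd hb] /andP[ha hc].
  suff E : b = c by move: cb; rewrite E ltnn.
  by apply: (@wv_inj w); lia.
- have := M1 d (ltnW ad) db; have := M2 a (ltnW ac) (ltnW ad) => /andP[hd hb] /andP[ha hc].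
  suff E : a = d by move: ad; rewrite E ltnn.
  by apply: (@wv_inj w); lia.
- by have := D2 a b (ltnW ac) (ltnW db) ab; lia.
Qed.

Lemma exists_max_kasc w i j : kasc k w i j ->
  exists a b, [/\ max_kasc k w a b, a <= i & j <= b].
Proof.
move=> Hij; pose P (p : 'I_n * 'I_n) := [&& kasc k w p.1 p.2, p.1 <= i & j <= p.2].
have P0 : P (i, j) by rewrite /P /= Hij !leqnn.
case: (arg_maxnP (fun p : 'I_n * 'I_n => p.2 - p.1) P0) => -[a b] /and3P[Hab ai jb] Mx.
exists a, b; split=> //; apply/max_kascP; split=> // c d Hcd ca bd.
have Pcd : P (c, d) by rewrite /P /= Hcd (leq_trans ca ai) (leq_trans jb bd).
have := Mx _ Pcd; have /kascP[cd _ _ _] := Hcd; have /kascP[ab _ _ _] := Hab.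
by move=> /= HH; split; apply: ord_inj; lia.
Qed.

Lemma kup_kasc w s t : s < t -> wv w s + k <= wv w t ->
  exists c d, [/\ s <= c, d <= t & kasc k w c d].
Proof.
move=> st hst.
(* A shortest k-up inside [s, t] is k-ascending. *)
pose P (p : 'I_n * 'I_n) := [&& s <= p.1, p.1 < p.2, p.2 <= t & wv w p.1 + k <= wv w p.2].
have P0 : P (s, t) by rewrite /P /= leqnn st leqnn hst.
case: (arg_minnP (fun p : 'I_n * 'I_n => p.2 - p.1) P0) => -[a b] /and4P[/= sa ab bt abk] Mn.
have shortest c d : a <= c -> c < d -> d <= b -> wv w c + k <= wv w d -> c = a /\ d = b.
  move=> ac cd db cdk; have /= := Mn (c, d).
  rewrite /P /= (leq_trans sa ac) cd (leq_trans db bt) cdk => /(_ isT) len.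
  by split; apply: ord_inj; lia.
have range (m : 'I_n) : a <= m -> m <= b -> wv w a <= wv w m <= wv w b.
  move=> am mb; apply/andP; split; rewrite leqNgt; apply/negP => hm.
  + have mb' : m < b by rewrite ltn_neqAle mb andbT; apply/eqP => /ord_inj E; subst; lia.
    by have [E _] := shortest m b am mb' (leqnn _) ltac:(lia); subst; lia.
  + have am' : a < m by rewrite ltn_neqAle am andbT; apply/eqP => /ord_inj E; subst; lia.
    by have [_ E] := shortest a m (leqnn _) am' mb ltac:(lia); subst; lia.
exists a, b; split=> //; apply/kascP; split=> // c d ac db cd.
rewrite ltnNge; apply/negP => dck.
have := range d (leq_trans ac (ltnW cd)) db => /andP[ad _].
have ac' : a < c by rewrite ltn_neqAle ac andbT; apply/eqP => /ord_inj E; subst; lia.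
have [_ E] := shortest a c (leqnn _) ac' (leq_trans (ltnW cd) db) ltac:(lia).
by subst; lia.
Qed.

Lemma kpeaksP w x : reflect
  ((exists i, max_kasc k w i x) \/ (exists j, max_kdesc k w x j)) (x \in kpeaks k w).
Proof. by rewrite inE; apply: (iffP orP) => -[] /existsP; auto. Qed.

Lemma kvalleysP w x : reflect
  ((exists j, max_kasc k w x j) \/ (exists i, max_kdesc k w i x)) (x \in kvalleys k w).
Proof. by rewrite inE; apply: (iffP orP) => -[] /existsP; auto. Qed.

End MonotoneSections.

Definition rev_perm n : 'S_n := perm (@rev_ord_inj n).

Definition complement n (w : 'S_n) : 'S_n := (w * rev_perm n)%g.

Section Complement.
Variables (n k : nat).
Implicit Types (w : 'S_n) (i j : 'I_n).

Lemma wv_complement w i : wv (complement w) i = n.-1 - wv w i.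
Proof. by rewrite /wv permM permE /=; lia. Qed.

Lemma complementK : involutive (@complement n).
Proof.
move=> w; apply/permP => i; rewrite /complement -mulgA.
by rewrite [X in (w * X)%g](_ : _ = 1%g) ?mulg1 // ; apply/permP => j; rewrite permM !permE rev_ordK.
Qed.

Lemma kasc_complement w i j : kasc k (complement w) i j = kdesc k w i j.
Proof.
have wi := wv_ltn w i; have wj := wv_ltn w j.
apply/kascP/kdescP => -[ij M ijk D]; split=> //; move: ijk; rewrite ?wv_complement //.
- move=> _ m im mj; have := M m im mj; rewrite !wv_complement.
  by have := wv_ltn w m; lia.
- lia.
- move=> _ s t si tj st; have := D s t si tj st; rewrite !wv_complement.
  by have := wv_ltn w s; have := wv_ltn w t; lia.
- move=> _ m im mj; have := M m im mj; rewrite !wv_complement.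
  by have := wv_ltn w m; lia.
- lia.
- move=> _ s t si tj st; have := D s t si tj st; rewrite !wv_complement.
  by have := wv_ltn w s; have := wv_ltn w t; lia.
Qed.

Lemma max_kasc_complement w i j : max_kasc k (complement w) i j = max_kdesc k w i j.
Proof.
rewrite /max_kasc /max_kdesc kasc_complement; congr (_ && _).
by apply: eq_forallb => c; apply: eq_forallb => d; rewrite kasc_complement.
Qed.

Lemma max_kdesc_complement w i j : max_kdesc k (complement w) i j = max_kasc k w i j.
Proof. by rewrite -max_kasc_complement complementK. Qed.

Lemma kpeaks_complement w : kpeaks k (complement w) = kvalleys k w.
Proof.
apply/setP => x; apply/kpeaksP/kvalleysP => -[[y M]|[y M]].
all: [> right | left | right | left]; exists y; move: M.
all: by rewrite (max_kasc_complement, max_kdesc_complement).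
Qed.

Lemma kvalleys_complement w : kvalleys k (complement w) = kpeaks k w.
Proof. by rewrite -kpeaks_complement complementK. Qed.
End Complement.

Lemma ord_interval_cases n (j a m : 'I_n) : j <= m -> m <= a ->
  [\/ m = j, j < m < a | m = a].
Proof.
move=> jm ma; case: (ltnP j m) => jm'; last by apply: Or31; apply: ord_inj; lia.
case: (ltnP m a) => ma'; last by apply: Or33; apply: ord_inj; lia.
by apply: Or32; apply/andP.
Qed.

Section Extrema.
Variables (n k : nat).
Hypothesis k_gt0 : 0 < k.
Implicit Types (w : 'S_n) (a b c d i j u v x y z : 'I_n).

Definition kextrema w : {set 'I_n} := kpeaks k w :|: kvalleys k w.

Lemma kextrema_complement w : kextrema (complement w) = kextrema w.
Proof. by rewrite /kextrema kpeaks_complement kvalleys_complement setUC. Qed.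

Lemma exists_max_kdesc w i j : kdesc k w i j ->
  exists a b, [/\ max_kdesc k w a b, a <= i & j <= b].
Proof.
rewrite -kasc_complement; case/(exists_max_kasc k_gt0) => a [b [M ai jb]].
by exists a, b; rewrite -max_kasc_complement.
Qed.

Lemma kdown_kdesc w (s t : 'I_n) : s < t -> wv w t + k <= wv w s ->
  exists c d, [/\ s <= c, d <= t & kdesc k w c d].
Proof.
move=> st tsk; have [|c [d [sc dt]]] := kup_kasc k_gt0 (w := complement w) st.
  by rewrite !wv_complement; have := wv_ltn w s; have := wv_ltn w t; lia.
by rewrite kasc_complement; exists c, d.
Qed.

Lemma max_kasc_kextrema w a b : max_kasc k w a b -> a \in kextrema w /\ b \in kextrema w.
Proof.
move=> M; rewrite !in_setU; split; apply/orP.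
- by right; apply/kvalleysP; left; exists b.
- by left; apply/kpeaksP; left; exists a.
Qed.

Lemma max_kdesc_kextrema w a b : max_kdesc k w a b -> a \in kextrema w /\ b \in kextrema w.
Proof.
move=> M; rewrite !in_setU; split; apply/orP.
- by left; apply/kpeaksP; right; exists b.
- by right; apply/kvalleysP; right; exists a.
Qed.

Lemma kextrema_endpoint w x : x \in kextrema w -> exists a b,
  (max_kasc k w a b \/ max_kdesc k w a b) /\ (x = a \/ x = b).
Proof.
rewrite in_setU => /orP[/kpeaksP[[i M]|[j M]] | /kvalleysP[[j M]|[i M]]].
- by exists i, x; split; [left | right].
- by exists x, j; split; [right | left].
- by exists x, j; split; [left | left].
- by exists i, x; split; [right | right].
Qed.

Lemma kpeaks_kvalleys_disjoint w : [disjoint kpeaks k w & kvalleys k w].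
Proof.
apply/pred0P => x /=; apply/negP => /andP[/kpeaksP[[i A]|[j B]] /kvalleysP[[j' C]|[i' D]]].
- have /max_kascP[/kascP[ix _ _ _] _] := A; have /max_kascP[HC _] := C.
  have /kascP[xj' _ _ _] := HC.
  have [_] := max_kasc_cover k_gt0 A HC (leqnn _) (ltnW (ltn_trans ix xj')).
  by rewrite leqNgt xj'.
- move: A D => /max_kascP[HA _] /andP[HD _].
  have /kascP[ix _ _ _] := HA; have /kdescP[i'x _ _ _] := HD.
  by have := kasc_kdesc_apart k_gt0 HA HD; rewrite (ltn_geF ix) (ltn_geF i'x).
- move: B C => /andP[HB _] /max_kascP[HC _].
  have /kascP[xj' _ _ _] := HC; have /kdescP[xj _ _ _] := HB.
  by have := kasc_kdesc_apart k_gt0 HC HB; rewrite (ltn_geF xj) (ltn_geF xj').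
- move: B D; rewrite -!max_kasc_complement => B D; have /max_kascP[HB _] := B.
  have /max_kascP[/kascP[i'x _ _ _] _] := D; have /kascP[xj _ _ _] := HB.
  have [_] := max_kasc_cover k_gt0 D HB (leqnn _) (ltnW (ltn_trans i'x xj)).
  by rewrite leqNgt xj.
Qed.

Lemma max_kasc_no_kextrema w a b x : max_kasc k w a b -> a < x -> x < b ->
  x \notin kextrema w.
Proof.
move=> Mab ax xb; apply/negP => /kextrema_endpoint[c [d [[S|S] E]]].
- have /max_kascP[/kascP[cd _ _ _] _] := S.
  have [cb ad] : c <= b /\ a <= d by case: E => E; subst; split; lia.
  have [ac bd] := max_kasc_eq k_gt0 Mab S cb ad; clear Mab S.
  by case: E => E; subst; rewrite ltnn in ax xb.
- move: Mab S => /max_kascP[HA _] /andP[HS _]; have /kdescP[cd _ _ _] := HS.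
  have := kasc_kdesc_apart k_gt0 HA HS.
  by case: E => E; subst; [rewrite (ltn_geF xb) (ltn_geF (ltn_trans ax cd))
                         | rewrite (ltn_geF ax) (ltn_geF (ltn_trans cd xb))].
Qed.

Lemma max_kdesc_no_kextrema w a b x : max_kdesc k w a b -> a < x -> x < b ->
  x \notin kextrema w.
Proof. by rewrite -max_kasc_complement -kextrema_complement; apply: max_kasc_no_kextrema. Qed.

Lemma kasc_extend w i j a : kasc k w i j -> j < a -> wv w j <= wv w a ->
  (forall x, j < x -> x < a -> wv w x < wv w j < wv w x + k) -> kasc k w i a.
Proof.
move=> /kascP[ij R ijk D] ja ha btw; apply/kascP; split.
- exact: ltn_trans ja.
- move=> m im ma; case: (leqP m j) => mj; first by have := R m im mj; lia.
  have [E|/andP[jm ma']|->] := ord_interval_cases (ltnW mj) ma.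
  + by move: mj; rewrite E ltnn.
  + by have := btw m jm ma'; have := R j (ltnW ij) (leqnn _); lia.
  + by have := R j (ltnW ij) (leqnn _); lia.
- by have := R j (ltnW ij) (leqnn _); lia.
- move=> s t si ta st; case: (leqP t j) => tj; first exact: D.
  have ht : wv w j < wv w t + k.
    have [E|/andP[jt ta']|->] := ord_interval_cases (ltnW tj) ta.
    + by move: tj; rewrite E ltnn.
    + by have := btw t jt ta'; lia.
    + lia.
  case: (leqP s j) => sj; first by have := R s si sj; lia.
  by have := btw s sj (leq_trans st ta); lia.
Qed.

Lemma kdesc_window w j a : j < a -> wv w a + k <= wv w j ->
  (forall x, j < x -> x < a -> wv w x < wv w j < wv w x + k) -> kdesc k w j a.
Proof.
move=> ja ha btw; apply/kdescP; split=> //.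
- move=> m jm ma; have [->|/andP[jm' ma']|->] := ord_interval_cases jm ma; try lia.
  by have := btw m jm' ma'; lia.
- move=> s t js ta st.
  have ht : wv w t < wv w j.
    have [E|/andP[jt ta']|->] := ord_interval_cases (leq_trans js (ltnW st)) ta.
    + by move: st; rewrite E ltnNge js.
    + by have := btw t jt ta'; lia.
    + lia.
  have [->|/andP[js' sa]|E] := ord_interval_cases js (ltnW (leq_trans st ta)); first lia.
  + by have := btw s js' sa; lia.
  + by move: st; rewrite E ltnNge ta.
Qed.

Lemma max_kasc_next w i j : max_kasc k w i j ->
  (exists b, max_kdesc k w j b) \/ (forall x, j < x -> wv w x < wv w j < wv w x + k).
Proof.
move=> /max_kascP[Hij Mx]; have /kascP[ij _ _ _] := Hij.
pose C x := (j < x) && ((wv w j <= wv w x) || (wv w x + k <= wv w j)).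
have [x0 Cx0|noC] := pickP C; last first.
  by right=> x jx; move/negbT: (noC x); rewrite /C jx negb_or -!ltnNge.
case: (arg_minnP (fun x : 'I_n => x : nat) Cx0) => a /andP[ja Ca] Mn.
have btw x : j < x -> x < a -> wv w x < wv w j < wv w x + k.
  move=> jx xa; case Cx: (C x); first by have := Mn x Cx; lia.
  by move/negbT: Cx; rewrite /C jx negb_or -!ltnNge.
case/orP: Ca => ha.
- have [_ aj] := Mx i a (kasc_extend Hij ja ha btw) (leqnn _) (ltnW ja).
  by move: ja; rewrite aj ltnn.
- left; have [c [d [M cj ad]]] := exists_max_kdesc (kdesc_window ja ha btw).
  suff E : c = j by exists d; rewrite -E.
  have /andP[/kdescP[cd _ _ _] _] := M.
  have := kasc_kdesc_apart k_gt0 Hij (proj1 (andP M)).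
  by move=> /orP[jc|di]; [apply: ord_inj; lia | lia].
Qed.

Lemma max_kasc_from_kvalley w u v : u \in kvalleys k w -> v \in kextrema w -> u < v ->
  (forall x, u < x -> x < v -> x \notin kextrema w) -> max_kasc k w u v.
Proof.
move=> uV vE uv gap.
have uE : u \in kextrema w by rewrite in_setU uV orbT.
(* If u only ends a maximal k-descending section, all later values stay in
   [w u, w u + k), leaving no room for a maximal section ending at v. *)
have [j Muj] : exists j, max_kasc k w u j.
  case/kvalleysP: (uV) => [//|[i]]; rewrite -max_kasc_complement => /max_kasc_next.
  case=> [[b]|win]; first by rewrite max_kdesc_complement; exists b.
  have win' x : u <= x -> wv w u <= wv w x < wv w u + k.
    move=> ux; case: (ltnP u x) => ux'.
      by have := win x ux'; rewrite !wv_complement; have := wv_ltn w x; have := wv_ltn w u; lia.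
    have -> : x = u by apply: ord_inj; lia.
    lia.
  have [a [b [S E]]] := kextrema_endpoint vE; exfalso.
  case: (leqP u a) => ua.
  - case: S => [/max_kascP[/kascP[ab _ abk _] _] | /andP[/kdescP[ab _ abk _] _]];
      by have := win' a ua; have := win' b (leq_trans ua (ltnW ab)); lia.
  - have vb : v = b by case: E => // E; move: uv; rewrite E ltnNge (ltnW ua).
    case: S => S; [have := max_kasc_no_kextrema S ua | have := max_kdesc_no_kextrema S ua];
      by rewrite -vb uE => /(_ uv).
have [_ jE] := max_kasc_kextrema Muj; have /max_kascP[/kascP[uj _ _ _] _] := Muj.
case: (ltngtP j v) => [jv|vj|/ord_inj <- //].
- by case: (negP (gap j uj jv) jE).
- by case: (negP (max_kasc_no_kextrema Muj uv vj) vE).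
Qed.

Lemma max_kdesc_from_kpeak w u v : u \in kpeaks k w -> v \in kextrema w -> u < v ->
  (forall x, u < x -> x < v -> x \notin kextrema w) -> max_kdesc k w u v.
Proof.
rewrite -max_kasc_complement -kvalleys_complement -kextrema_complement.
by move=> uV vE uv gap; apply: max_kasc_from_kvalley => // x ux xv; rewrite kextrema_complement gap.
Qed.

Lemma kextrema_step w a b : a \in kextrema w -> b \in kextrema w -> a < b ->
  (forall x, a < x -> x < b -> x \notin kextrema w) ->
  [/\ (a \in kpeaks k w) = (wv w b < wv w a), (b \in kpeaks k w) = (a \notin kpeaks k w) &
      (wv w a + k <= wv w b) || (wv w b + k <= wv w a)].
Proof.
move=> aE bE ab gap; have disj := kpeaks_kvalleys_disjoint w.
case aP: (a \in kpeaks k w).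
- have M := max_kdesc_from_kpeak aP bE ab gap.
  have bV : b \in kvalleys k w by apply/kvalleysP; right; exists a.
  move: M => /andP[/kdescP[_ _ bak _] _]; have ba : wv w b < wv w a by lia.
  by rewrite (disjointFl disj bV) ba bak orbT.
- have aV : a \in kvalleys k w by move: aE; rewrite in_setU aP.
  have M := max_kasc_from_kvalley aV bE ab gap.
  have bP : b \in kpeaks k w by apply/kpeaksP; left; exists a.
  move: M => /max_kascP[/kascP[_ _ abk _] _]; have ab' : wv w a < wv w b by lia.
  by rewrite bP ltnNge (ltnW ab') abk.
Qed.

Lemma kzigzag_kextrema w : kzigzag k (subseq_at w (kextrema w)).
Proof.
apply: (kzigzag_marked (P := mem (kpeaks k w))) k_gt0 _ => x0 i ilt.
have mem_e (m : nat) : m < size (enum (kextrema w)) -> nth x0 (enum (kextrema w)) m \in kextrema w.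
  by move=> mlt; rewrite -mem_enum; apply: mem_nth.
apply: kextrema_step; [exact: mem_e (ltnW ilt) | exact: mem_e ilt | | ].
- by have /(sortedP x0) := sorted_enum_ltn (kextrema w); apply.
- by move=> x; apply: enum_gap.
Qed.

Definition max_section_over w x y a b : bool :=
  [&& if wv w x < wv w y then max_kasc k w a b else max_kdesc k w a b, a < y & x < b].

Lemma max_section_over_kextrema w x y a b : max_section_over w x y a b ->
  [/\ a < b, a \in kextrema w & b \in kextrema w].
Proof.
case/and3P; case: ifP => _ M _ _.
- have [aE bE] := max_kasc_kextrema M.
  by move: M => /max_kascP[/kascP[ab _ _ _] _]; split.
- have [aE bE] := max_kdesc_kextrema M.
  by move: M => /andP[/kdescP[ab _ _ _] _]; split.
Qed.

Lemma exists_max_section_over w x y : x < y ->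
  (wv w x + k <= wv w y) || (wv w y + k <= wv w x) -> exists a b, max_section_over w x y a b.
Proof.
move=> xy G; rewrite /max_section_over; case xy_up: (wv w x < wv w y).
- have [c [d [xc dy Hcd]]] := kup_kasc k_gt0 (w := w) xy ltac:(lia); have /kascP[cd _ _ _] := Hcd.
  have [a [b [M ac db]]] := exists_max_kasc k_gt0 Hcd.
  by exists a, b; rewrite M /=; apply/andP; split; lia.
- have [c [d [xc dy Hcd]]] := kdown_kdesc (w := w) xy ltac:(lia); have /kdescP[cd _ _ _] := Hcd.
  have [a [b [M ac db]]] := exists_max_kdesc Hcd.
  by exists a, b; rewrite M /=; apply/andP; split; lia.
Qed.

Lemma max_section_over_lt w x y z a b a' b' : (wv w x < wv w y) != (wv w y < wv w z) ->
  max_section_over w x y a b -> max_section_over w y z a' b' -> a < a'.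
Proof.
rewrite /max_section_over; case: (wv w x < wv w y); case: (wv w y < wv w z) => // _.
- move=> /and3P[/max_kascP[Hab _] ay _] /and3P[/andP[Hab' _] _ yb'].
  by have /kascP[ab _ _ _] := Hab; have := kasc_kdesc_apart k_gt0 Hab Hab'; lia.
- move=> /and3P[/andP[Hab _] ay _] /and3P[/max_kascP[Hab' _] _ yb'].
  by have /kdescP[ab _ _ _] := Hab; have := kasc_kdesc_apart k_gt0 Hab' Hab; lia.
Qed.

Lemma kextrema_count w (t : seq 'I_n) x y a b :
  sorted (fun i j : 'I_n => i < j) [:: x, y & t] ->
  gapped k (map (wv w) [:: x, y & t]) -> alternating (map (wv w) [:: x, y & t]) ->
  max_section_over w x y a b -> (size t).+2 <= #|[set u in kextrema w | a <= u]|.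
Proof.
have memS c u : (u \in [set u in kextrema w | c <= u]) = (u \in kextrema w) && (c <= u).
  by rewrite !inE.
elim: t x y a b => [|z t IH] x y a b.
  move=> _ _ _ /max_section_over_kextrema[ab aE bE].
  have ab' : a != b by apply/eqP => E; rewrite E ltnn in ab.
  apply: (@leq_trans #|[set a; b]|); first by rewrite cards2 ab'.
  apply: subset_leq_card.
  by apply/subsetP => u; rewrite in_set2 => /orP[] /eqP->; rewrite memS ?aE ?bE ?leqnn ?(ltnW ab).
move=> /= /andP[_ srt] G A Mxy.
have [a' [b' My]] := exists_max_section_over (w := w) (proj1 (andP srt)) (G 1 isT).
have aa' := max_section_over_lt (A 0 isT) Mxy My.
have := IH y z a' b' srt (fun m => G m.+1) (fun m => A m.+1) My.
move/leq_ltn_trans; apply; apply: proper_card; apply/properP; split.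
- by apply/subsetP => u; rewrite !memS => /andP[-> /(leq_trans aa')/ltnW ->].
- have [_ aE _] := max_section_over_kextrema Mxy.
  by exists a; rewrite !memS ?aE ?leqnn // -ltnNge.
Qed.

Lemma zigzag_card_le w I : kzigzag k (subseq_at w I) -> 1 < #|I| -> #|I| <= #|kextrema w|.
Proof.
rewrite cardE /subseq_at => /(kzigzagE _ k_gt0)[G A].
have := sorted_enum_ltn I; case: (enum I) G A => [|x [|y t]] // G A srt _.
have [a [b M]] := exists_max_section_over (w := w) (proj1 (andP srt)) (G 0 isT).
apply: leq_trans (kextrema_count srt G A M) _.
by rewrite setIdE; apply/subset_leq_card/subsetIl.
Qed.

Lemma kextrema_nonempty w : 1 < n -> k <= n.-1 -> 0 < #|kextrema w|.
Proof.
move=> n_gt1 kn.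
pose p0 := (w^-1)%g (@Ordinal n 0 ltac:(lia)).
pose p1 := (w^-1)%g (@Ordinal n n.-1 ltac:(lia)).
have wp0 : wv w p0 = 0 by rewrite /wv permKV.
have wp1 : wv w p1 = n.-1 by rewrite /wv permKV.
have [x [y [xy G]]] : exists x y, x < y /\ (wv w x + k <= wv w y) || (wv w y + k <= wv w x).
  case: (ltngtP p0 p1) => [lt|lt|/ord_inj eq].
  - by exists p0, p1; rewrite wp0 wp1; split=> //; apply/orP; left.
  - by exists p1, p0; rewrite wp0 wp1; split=> //; apply/orP; right.
  - by move: wp0; rewrite eq wp1; lia.
have [a [b /max_section_over_kextrema[_ aE _]]] := exists_max_section_over xy G.
by apply/card_gt0P; exists a.
Qed.

Lemma zs_kextrema w : 1 < n -> k <= n.-1 -> zs k w = #|kextrema w|.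
Proof.
move=> n_gt1 kn; apply/eqP; rewrite eqn_leq; apply/andP; split.
- apply/bigmax_leqP => I ZI; case: (ltnP 1 #|I|) => [I_gt1|I_le1].
  + exact: zigzag_card_le.
  + exact: leq_trans I_le1 (kextrema_nonempty w n_gt1 kn).
- exact: (leq_bigmax_cond (F := fun I : {set 'I_n} => #|I|) _ (kzigzag_kextrema w)).
Qed.
End Extrema.

Lemma sum_card_kvalleys n k :
  \sum_(w : 'S_n) #|kvalleys k w| = \sum_(w : 'S_n) #|kpeaks k w|.
Proof.
rewrite (reindex_inj (can_inj (@complementK n))) /=.
by apply: eq_bigr => w _; rewrite kvalleys_complement.
Qed.

Theorem proposition2p8 (n k : nat) :
  2 <= n -> 1 <= k <= n - 1 ->
  (forall w : 'S_n,
     [/\ kzigzag k (subseq_at w (kpeaks k w :|: kvalleys k w)),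
         zs k w = #|kpeaks k w :|: kvalleys k w| &
         zs k w = #|kpeaks k w| + #|kvalleys k w|]) /\
  E_zs n k = (2%:R / (n`!)%:R * \sum_(w : 'S_n) (#|kpeaks k w|)%:R)%R.
Proof.
move=> n_gt1 /andP[k_gt0 kn].
have zsE (w : 'S_n) : zs k w = #|kpeaks k w| + #|kvalleys k w|.
  rewrite (zs_kextrema k_gt0 w n_gt1 ltac:(lia)) cardsU.
  by rewrite (disjoint_setI0 (kpeaks_kvalleys_disjoint k_gt0 w)) cards0 subn0.
split=> [w|].
  by split; [exact: kzigzag_kextrema | rewrite zs_kextrema //; lia | exact: zsE].
rewrite /E_zs (eq_bigr _ (fun w _ => zsE w)) big_split /= sum_card_kvalleys addnn -mul2n.
by rewrite natrM natr_sum mulrAC.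
Qed.
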